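(* Let $\mathbb C_4$ be the complex Clifford algebra generated by $e_1,\dots,e_4$ with $e_je_l+e_le_j=-2\delta_{jl}$, $e_{ij}=e_ie_j$. Let $S^+_4$ be the span of $v^+=\frac14(1-ie_{12})(1-ie_{34})$ and $v^-=\frac14(e_1+ie_2)(e_3+ie_4)$, and let $S^-_4$ be the span of $v^+=\frac14(1-ie_{12})(e_3+ie_4)$ and $v^-=\frac14(e_1+ie_2)(1-ie_{34})$; each is a realization of the basic spinor representation $S$ of $Spin(3)$ under left Clifford multiplication by $e_1,e_2,e_3$. Write $(a,b)$ for $a v^++b v^-$. For $k\in\mathbb N_0$ let $\mathcal M_k(\mathbb R^3,S^\pm_4)$ be the space of $S^\pm_4$-valued $k$-homogeneous polynomials $P$ on $\mathbb R^3$ with $(e_1\partial_{x_1}+e_2\partial_{x_2}+e_3\partial_{x_3})P=0$, and define its basis $F^{k,\pm}_0=\frac{1}{k!2^k}\overline z^k v^+$, $F^{k,\pm}_j=(\tilde X^-)^jF^{k,\pm}_0$ ($0<j\le 2k+1$), where $z=x_1+ix_2$, $\overline z=x_1-ix_2$, $\tilde X^-=2x_3\frac{\partial}{\partial\overline z}-z\frac{\partial}{\partial x_3}+\frac12(-e_{31}+ie_{23})$ with $\frac{\partial}{\partial \overline z}=\frac12(\partial_{x_1}+i\partial_{x_2})$ and the Clifford element acting by left multiplication. Using spherical coordinates $x_1=r\sin\theta\sin\varphi$, $x_2=r\sin\theta\cos\varphi$, $x_3=r\cos\theta$ ($r\ge0$, $-\pi\le\varphi\le\pi$, $0\le\theta\le\pi$),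 we have for each $j=0,\dots,2k+1$ $$F^{k,\pm}_j(r,\theta,\varphi)=i^{k-j}r^ke^{i(k-j)\varphi}\Big(P^{j-k}_k(\cos\theta),\ \pm\, ij\,e^{i\varphi}P^{j-k-1}_k(\cos\theta)\Big),$$ where $P^l_k(s)=\frac{1}{k!\,2^k}(1-s^2)^{l/2}\frac{d^{l+k}}{ds^{l+k}}(s^2-1)^k$ for $s\in\mathbb R$, and by convention $P^{k+1}_k=0=P^{-k-1}_k$.
   Context: $P^0_k$ is the $k$-th Legendre polynomial and $P^l_k$ are its associated Legendre functions. *)

From Stdlib Require Import Reals Factorial ZArith List.
From Coquelicot Require Import Coquelicot.
Import ListNotations.

Open Scope R_scope.

(* The complex Clifford algebra C_4 = Cl_{0,4} (x) C, realised on its  *)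
(* standard blade basis e_A, A a subset of {1,2,3,4} (encoded by four  *)
(* booleans).  e_A e_B = sgn(A,B) e_{A xor B} where the sign counts    *)
(* the transpositions needed to sort the word (pairs i in A, j in B,   *)
(* i > j) and one factor e_i e_i = -1 per common index.                *)

Definition blade : Type := (bool * bool * bool * bool)%type.

Definition bit (A : blade) (i : nat) : bool :=
  match A with (a1, a2, a3, a4) =>
    match i with 0 => a1 | 1 => a2 | 2 => a3 | 3 => a4 | _ => false end
  end.

Definition bxor (A B : blade) : blade :=
  match A, B with (a1, a2, a3, a4), (b1, b2, b3, b4) =>
    (xorb a1 b1, xorb a2 b2, xorb a3 b3, xorb a4 b4) end.

Definition blade_eqb (A B : blade) : bool :=
  match A, B with (a1, a2, a3, a4), (b1, b2, b3, b4) =>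
    Bool.eqb a1 b1 && Bool.eqb a2 b2 && Bool.eqb a3 b3 && Bool.eqb a4 b4 end.

Definition all_blades : list blade :=
  flat_map (fun a1 => flat_map (fun a2 => flat_map (fun a3 =>
    map (fun a4 => (a1, a2, a3, a4)) [false; true]) [false; true]) [false; true])
    [false; true].

Definition idx4 : list nat := [0; 1; 2; 3]%nat.

Definition blade_flips (A B : blade) : nat :=
  (length (filter (fun ij => let '(i, j) := ij in
             (Nat.ltb j i && bit A i && bit B j)%bool)
           (list_prod idx4 idx4))
   + length (filter (fun i => (bit A i && bit B i)%bool) idx4))%nat.

Definition blade_sign (A B : blade) : C :=
  if Nat.even (blade_flips A B) then RtoC 1 else RtoC (-1).

Definition Cl4 : Type := blade -> C.

Definition csum (l : list blade) (f : blade -> C) : C :=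
  fold_right (fun A acc => Cplus (f A) acc) (RtoC 0) l.

Definition cl_add (a b : Cl4) : Cl4 := fun A => Cplus (a A) (b A).
Definition cl_scal (c : C) (a : Cl4) : Cl4 := fun A => Cmult c (a A).
Definition cl_opp (a : Cl4) : Cl4 := cl_scal (RtoC (-1)) a.
Definition cl_mul (a b : Cl4) : Cl4 :=
  fun D => csum all_blades
             (fun A => Cmult (blade_sign A (bxor A D)) (Cmult (a A) (b (bxor A D)))).

Definition cl_basis (A : blade) : Cl4 :=
  fun B => if blade_eqb A B then RtoC 1 else RtoC 0.

Definition cl_one : Cl4 := cl_basis (false, false, false, false).
Definition e1 : Cl4 := cl_basis (true, false, false, false).
Definition e2 : Cl4 := cl_basis (false, true, false, false).
Definition e3 : Cl4 := cl_basis (false, false, true, false).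
Definition e4 : Cl4 := cl_basis (false, false, false, true).

Definition e12 : Cl4 := cl_mul e1 e2.
Definition e34 : Cl4 := cl_mul e3 e4.
Definition e31 : Cl4 := cl_mul e3 e1.
Definition e23 : Cl4 := cl_mul e2 e3.

Definition f12 : Cl4 := cl_add cl_one (cl_scal (Copp Ci) e12).
Definition f34 : Cl4 := cl_add cl_one (cl_scal (Copp Ci) e34).
Definition g12 : Cl4 := cl_add e1 (cl_scal Ci e2).
Definition g34 : Cl4 := cl_add e3 (cl_scal Ci e4).

(* The two spinor spaces: s = true for S^+_4, s = false for S^-_4. *)
Definition vplus (s : bool) : Cl4 :=
  cl_scal (RtoC (1/4)) (if s then cl_mul f12 f34 else cl_mul f12 g34).
Definition vminus (s : bool) : Cl4 :=
  cl_scal (RtoC (1/4)) (if s then cl_mul g12 g34 else cl_mul g12 f34).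

Definition spinor_pair (s : bool) (a b : C) : Cl4 :=
  cl_add (cl_scal a (vplus s)) (cl_scal b (vminus s)).

Definition Fn3 : Type := R -> R -> R -> Cl4.

Definition DeriveC (f : R -> C) (t : R) : C :=
  (Derive (fun u => fst (f u)) t, Derive (fun u => snd (f u)) t).

Definition d1 (G : Fn3) : Fn3 :=
  fun x1 x2 x3 A => DeriveC (fun t => G t x2 x3 A) x1.
Definition d2 (G : Fn3) : Fn3 :=
  fun x1 x2 x3 A => DeriveC (fun t => G x1 t x3 A) x2.
Definition d3 (G : Fn3) : Fn3 :=
  fun x1 x2 x3 A => DeriveC (fun t => G x1 x2 t A) x3.

Definition zc (x1 x2 : R) : C := (x1, x2).
Definition zbar (x1 x2 : R) : C := (x1, - x2).

Definition dzbar (G : Fn3) : Fn3 :=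
  fun x1 x2 x3 => cl_scal (RtoC (1/2)) (cl_add (d1 G x1 x2 x3) (cl_scal Ci (d2 G x1 x2 x3))).

Definition Xcl : Cl4 := cl_scal (RtoC (1/2)) (cl_add (cl_opp e31) (cl_scal Ci e23)).

Definition Xminus (G : Fn3) : Fn3 :=
  fun x1 x2 x3 =>
    cl_add (cl_add (cl_scal (RtoC (2 * x3)) (dzbar G x1 x2 x3))
                   (cl_scal (Copp (zc x1 x2)) (d3 G x1 x2 x3)))
           (cl_mul Xcl (G x1 x2 x3)).

Definition F0 (s : bool) (k : nat) : Fn3 :=
  fun x1 x2 x3 =>
    cl_scal (Cmult (RtoC (/ (INR (fact k) * 2 ^ k))) (Cpow (zbar x1 x2) k)) (vplus s).

Definition F (s : bool) (k j : nat) : Fn3 := Nat.iter j Xminus (F0 s k).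

(* with P^l_k = 0 when l + k < 0 (covers the convention P^{-k-1}_k=0); *)
(* P^{k+1}_k = 0 holds automatically (derivative of order 2k+1 of a     *)
(* polynomial of degree 2k).  (1-s^2)^{l/2} is sqrt(1-s^2)^l for l>=0   *)
(* and 1/sqrt(1-s^2)^(-l) for l<0.                                      *)

Definition half_pow (x : R) (l : Z) : R :=
  if (0 <=? l)%Z then sqrt x ^ Z.to_nat l else / (sqrt x ^ Z.to_nat (- l)).

Definition assocLegendre (l : Z) (k : nat) (s : R) : R :=
  if (l + Z.of_nat k <? 0)%Z then 0
  else / (INR (fact k) * 2 ^ k) * half_pow (1 - s ^ 2) l
       * Derive_n (fun u => (u ^ 2 - 1) ^ k) (Z.to_nat (l + Z.of_nat k)) s.

Definition cexpi (t : R) : C := (cos t, sin t).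

Definition Ci_zpow (n : Z) : C :=
  if (0 <=? n)%Z then Cpow Ci (Z.to_nat n) else Cpow (Copp Ci) (Z.to_nat (- n)).

(* Write F^{k,±}_j = A_j v^+ + B_j v^-.  The Clifford part of X~^- sends v^+ to ±v^- and
   kills v^-, so A_{j+1} = D A_j and B_{j+1} = D B_j ± A_j for the scalar operator
   D = 2 x3 d/dzbar - z d/dx3; hence A_j = D^j zbar^k / (k! 2^k) and B_j = ± j A_{j-1}.
   Both D and d/ds are derivations sending a triple (P, Q, U) to (2 Q, -U, 0): take
   (zbar, x3, z) for D and (s^2 - 1, s, -1) for d/ds.  So D^m zbar^k and d^m/ds^m (s^2 - 1)^k
   are the same polynomial in (P, Q, U), whose monomials P^a Q^b U^c all have degree k and
   a - c = k - m.  In spherical coordinates each such monomial equals the common phase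
   i^(k-m) r^k e^(i(k-m)phi) times (1 - cos^2 theta)^((m-k)/2) times its value at
   (cos^2 theta - 1, cos theta, -1), which turns Rodrigues' formula into the claim. *)

From Pilot Require Import Defs.
From Stdlib Require Import Reals ZArith FunctionalExtensionality Lra Lia.
From Coquelicot Require Import Coquelicot.
Set Bullet Behavior "Strict Subproofs".

Definition is_deriveC (f : R -> C) (t : R) (l : C) : Prop :=
  is_derive (fun u => fst (f u)) t (fst l) /\ is_derive (fun u => snd (f u)) t (snd l).

Lemma is_deriveC_unique f t l : is_deriveC f t l -> DeriveC f t = l.
Proof.
  intros [H1 H2]; apply injective_projections; now apply is_derive_unique.
Qed.

Lemma is_deriveC_ext f g t l l' :
  (forall u, f u = g u) -> l = l' -> is_deriveC f t l -> is_deriveC g t l'.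
Proof.
  intros E <- [H1 H2]; split; eapply is_derive_ext; eauto; intros u; simpl; now rewrite E.
Qed.

Lemma is_deriveC_const (c : C) t : is_deriveC (fun _ => c) t 0.
Proof. split; simpl; auto_derive; auto. Qed.

Lemma is_deriveC_RtoC (f : R -> R) t l : is_derive f t l -> is_deriveC (fun u => RtoC (f u)) t l.
Proof. intros H; split; [exact H | simpl; auto_derive; auto]. Qed.

Lemma is_derive_value (f : R -> R) t a b : a = b -> is_derive f t a -> is_derive f t b.
Proof. now intros <-. Qed.

Lemma is_deriveC_plus f g t a b :
  is_deriveC f t a -> is_deriveC g t b -> is_deriveC (fun u => f u + g u)%C t (a + b)%C.
Proof.
  intros [F1 F2] [G1 G2]; split; simpl.
  - exact (is_derive_plus _ _ _ _ _ F1 G1).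
  - exact (is_derive_plus _ _ _ _ _ F2 G2).
Qed.

Lemma is_deriveC_mult f g t a b :
  is_deriveC f t a -> is_deriveC g t b ->
  is_deriveC (fun u => f u * g u)%C t (a * g t + f t * b)%C.
Proof.
  intros [F1 F2] [G1 G2].
  assert (Hc : forall x y : R, x * y = y * x) by (intros; ring).
  pose proof (is_derive_mult _ _ _ _ _ F1 G1 Hc) as M11.
  pose proof (is_derive_mult _ _ _ _ _ F1 G2 Hc) as M12.
  pose proof (is_derive_mult _ _ _ _ _ F2 G1 Hc) as M21.
  pose proof (is_derive_mult _ _ _ _ _ F2 G2 Hc) as M22.
  split; simpl; eapply is_derive_value.
  2: exact (is_derive_minus _ _ _ _ _ M11 M22).
  3: exact (is_derive_plus _ _ _ _ _ M12 M21).
  all: unfold minus, plus, mult, opp; simpl; ring.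
Qed.

Lemma is_deriveC_scal (K : C) f t a :
  is_deriveC f t a -> is_deriveC (fun u => K * f u)%C t (K * a)%C.
Proof.
  intros H; eapply is_deriveC_ext;
    [reflexivity| |exact (is_deriveC_mult _ _ _ _ _ (is_deriveC_const K t) H)].
  cbv beta; ring.
Qed.

Lemma is_deriveC_pow f t a n :
  is_deriveC f t a -> is_deriveC (fun u => f u ^ n)%C t (INR n * f t ^ pred n * a)%C.
Proof.
  intros H; induction n as [|n IH].
  - apply (is_deriveC_ext (fun _ => RtoC 1) _ _ 0); [reflexivity|simpl INR; ring|apply is_deriveC_const].
  - eapply is_deriveC_ext; [reflexivity| |exact (is_deriveC_mult _ _ _ _ _ H IH)].
    cbv beta; destruct n as [|n]; [simpl; ring|].
    rewrite (S_INR (S n)), RtoC_plus; simpl pred; rewrite Cpow_S; ring.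
Qed.

Fixpoint sumC (f : nat -> C) (n : nat) : C :=
  match n with O => f O | S n' => (sumC f n' + f (S n'))%C end.

Lemma sumC_ext f g n : (forall i, (i <= n)%nat -> f i = g i) -> sumC f n = sumC g n.
Proof.
  induction n as [|n IH]; intros H; simpl; [apply H; lia|].
  rewrite IH, H; [reflexivity|lia|intros; apply H; lia].
Qed.

Lemma sumC_plus f g n : sumC (fun i => f i + g i)%C n = (sumC f n + sumC g n)%C.
Proof. induction n as [|n IH]; simpl; [reflexivity|]; rewrite IH; ring. Qed.

Lemma sumC_minus f g n : sumC (fun i => f i - g i)%C n = (sumC f n - sumC g n)%C.
Proof. induction n as [|n IH]; simpl; [reflexivity|]; rewrite IH; ring. Qed.

Lemma sumC_mult_l K f n : sumC (fun i => K * f i)%C n = (K * sumC f n)%C.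
Proof. induction n as [|n IH]; simpl; [reflexivity|]; rewrite IH; ring. Qed.

Lemma sumC_Sn_l f n : sumC f (S n) = (f O + sumC (fun i => f (S i)) n)%C.
Proof. induction n as [|n IH]; simpl in *; [reflexivity|]; rewrite IH; ring. Qed.

Lemma is_deriveC_sum (f : nat -> R -> C) df t n :
  (forall i, (i <= n)%nat -> is_deriveC (f i) t (df i)) ->
  is_deriveC (fun u => sumC (fun i => f i u) n) t (sumC df n).
Proof.
  induction n as [|n IH]; intros H; simpl; [apply H; lia|].
  apply is_deriveC_plus; [apply IH; intros; apply H|apply H]; lia.
Qed.

Definition mon (a b c : nat) (P Q U : C) : C := (P ^ a * Q ^ b * U ^ c)%C.

Definition msum (n : nat) (w : nat -> R) (a b c : nat -> nat) (P Q U : C) : C :=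
  sumC (fun i => w i * mon (a i) (b i) (c i) P Q U)%C n.

Lemma is_deriveC_msum n w a b c P Q U P' Q' U' t :
  is_deriveC P t P' -> is_deriveC Q t Q' -> is_deriveC U t U' ->
  is_deriveC (fun u => msum n w a b c (P u) (Q u) (U u)) t
    (P' * msum n (fun i => w i * INR (a i))%R (fun i => pred (a i)) b c (P t) (Q t) (U t)
     + Q' * msum n (fun i => w i * INR (b i))%R a (fun i => pred (b i)) c (P t) (Q t) (U t)
     + U' * msum n (fun i => w i * INR (c i))%R a b (fun i => pred (c i)) (P t) (Q t) (U t))%C.
Proof.
  intros HP HQ HU.
  eapply is_deriveC_ext; [reflexivity| |apply is_deriveC_sum; intros i _; apply is_deriveC_scal;
    apply is_deriveC_mult; [apply is_deriveC_mult|]; apply is_deriveC_pow; eassumption].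
  unfold msum, mon; rewrite <- !sumC_mult_l, <- !sumC_plus.
  apply sumC_ext; intros i _; rewrite !RtoC_mult; ring.
Qed.

Fixpoint deriv_poly_coef (k m c : nat) : R :=
  match m with
  | O => if Nat.eqb c 0 then 1 else 0
  | S m' => 2 * INR (k + c - m') * deriv_poly_coef k m' c
            - match c with O => 0 | S c' => INR (m' - 2 * c') * deriv_poly_coef k m' c' end
  end.

Lemma deriv_poly_coef_support k m c : deriv_poly_coef k m c <> 0 -> (2 * c <= m <= k + c)%nat.
Proof.
  revert c; induction m as [|m IH]; intros c H; cbn [deriv_poly_coef] in H.
  - destruct c; simpl in H; [lia|lra].
  - destruct (Req_dec (deriv_poly_coef k m c) 0) as [E|E].
    + rewrite E, Rmult_0_r in H; destruct c as [|c]; [lra|].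
      destruct (Req_dec (deriv_poly_coef k m c) 0) as [E'|E']; [rewrite E' in H; lra|].
      specialize (IH _ E'); destruct (Nat.eq_dec (m - 2 * c) 0) as [Hb|Hb]; [|lia].
      rewrite Hb in H; simpl in H; lra.
    + pose proof (IH _ E); destruct (Nat.eq_dec (k + c - m) 0) as [Ha|Ha]; [|lia].
      rewrite Ha in H; simpl INR in H; destruct c as [|c]; [lra|].
      destruct (Req_dec (deriv_poly_coef k m c) 0) as [E'|E']; [rewrite E' in H; lra|].
      pose proof (IH _ E'); lia.
Qed.

Lemma deriv_poly_coef_gt k m c : (m < c)%nat -> deriv_poly_coef k m c = 0.
Proof.
  intros H; destruct (Req_dec (deriv_poly_coef k m c) 0) as [E|E]; [exact E|].
  apply deriv_poly_coef_support in E; lia.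
Qed.

Lemma deriv_poly_coef_reindex k m (M : nat -> C) :
  sumC (fun c => deriv_poly_coef k m c * (2 * INR (k + c - m) * M c - INR (m - 2 * c) * M (S c)))%C m
  = sumC (fun c => deriv_poly_coef k (S m) c * M c)%C (S m).
Proof.
  set (sh := fun c => match c with O => 0 | S c' => INR (m - 2 * c') * deriv_poly_coef k m c' end).
  assert (Hlast : sumC (fun c => 2 * INR (k + c - m) * deriv_poly_coef k m c * M c)%C (S m)
                  = sumC (fun c => 2 * INR (k + c - m) * deriv_poly_coef k m c * M c)%C m).
  { cbn [sumC]; rewrite (deriv_poly_coef_gt k m (S m)) by lia; ring. }
  assert (Hfirst : sumC (fun c => sh c * M c)%C (S m)
                   = sumC (fun c => INR (m - 2 * c) * deriv_poly_coef k m c * M (S c))%C m).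
  { rewrite sumC_Sn_l; unfold sh at 1; rewrite Cmult_0_l, Cplus_0_l.
    apply sumC_ext; intros c _; unfold sh; now rewrite RtoC_mult. }
  transitivity (sumC (fun c => 2 * INR (k + c - m) * deriv_poly_coef k m c * M c)%C (S m)
                - sumC (fun c => sh c * M c)%C (S m))%C.
  - rewrite Hlast, Hfirst, <- sumC_minus.
    apply sumC_ext; intros c _; ring.
  - rewrite <- sumC_minus.
    apply sumC_ext; intros c _; unfold sh; cbn [deriv_poly_coef].
    rewrite RtoC_minus, !RtoC_mult; ring.
Qed.

(* D^m (P^k) for any derivation D with D P = 2 Q, D Q = - U and D U = 0 (deriv_poly_S);
   deriv_poly_dP, _dQ and _dU are its formal partial derivatives. *)
Definition deriv_poly (k m : nat) : C -> C -> C -> C :=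
  msum m (deriv_poly_coef k m) (fun c => k + c - m)%nat (fun c => m - 2 * c)%nat (fun c => c).

Definition deriv_poly_dP (k m : nat) : C -> C -> C -> C :=
  msum m (fun c => deriv_poly_coef k m c * INR (k + c - m)) (fun c => pred (k + c - m))
    (fun c => m - 2 * c)%nat (fun c => c).

Definition deriv_poly_dQ (k m : nat) : C -> C -> C -> C :=
  msum m (fun c => deriv_poly_coef k m c * INR (m - 2 * c)) (fun c => k + c - m)%nat
    (fun c => pred (m - 2 * c)) (fun c => c).

Definition deriv_poly_dU (k m : nat) : C -> C -> C -> C :=
  msum m (fun c => deriv_poly_coef k m c * INR c) (fun c => k + c - m)%nat
    (fun c => m - 2 * c)%nat (fun c => pred c).

Lemma is_deriveC_deriv_poly k m P Q U P' Q' U' t :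
  is_deriveC P t P' -> is_deriveC Q t Q' -> is_deriveC U t U' ->
  is_deriveC (fun u => deriv_poly k m (P u) (Q u) (U u)) t
    (P' * deriv_poly_dP k m (P t) (Q t) (U t) + Q' * deriv_poly_dQ k m (P t) (Q t) (U t)
     + U' * deriv_poly_dU k m (P t) (Q t) (U t))%C.
Proof. apply is_deriveC_msum. Qed.

Lemma deriv_poly_0 k P Q U : deriv_poly k 0 P Q U = (P ^ k)%C.
Proof. unfold deriv_poly, msum, mon; simpl; rewrite Nat.add_0_r, Nat.sub_0_r; ring. Qed.

Lemma deriv_poly_S k m P Q U :
  (2 * Q * deriv_poly_dP k m P Q U - U * deriv_poly_dQ k m P Q U)%C = deriv_poly k (S m) P Q U.
Proof.
  set (M := fun c => mon (k + c - S m) (S m - 2 * c) c P Q U).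
  transitivity (sumC (fun c => deriv_poly_coef k m c * (2 * INR (k + c - m) * M c
                                              - INR (m - 2 * c) * M (S c)))%C m).
  2: apply deriv_poly_coef_reindex.
  unfold deriv_poly_dP, deriv_poly_dQ, msum; rewrite <- !sumC_mult_l, <- sumC_minus.
  apply sumC_ext; intros c _.
  destruct (Req_dec (deriv_poly_coef k m c) 0) as [H0|Hsupp]; [rewrite H0, !Rmult_0_l; ring|].
  apply deriv_poly_coef_support in Hsupp.
  assert (HQ : (Q * mon (pred (k + c - m)) (m - 2 * c) c P Q U * INR (k + c - m)
                = INR (k + c - m) * M c)%C).
  { destruct (k + c - m)%nat as [|a] eqn:Ea; [simpl INR; ring|].
    unfold M, mon; replace (k + c - S m)%nat with a by lia.
    replace (S m - 2 * c)%nat with (S (m - 2 * c)) by lia; simpl pred; rewrite Cpow_S; ring. }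
  assert (HU : (U * mon (k + c - m) (pred (m - 2 * c)) c P Q U * INR (m - 2 * c)
                = INR (m - 2 * c) * M (S c))%C).
  { destruct (m - 2 * c)%nat as [|b] eqn:Eb; [simpl INR; ring|].
    unfold M, mon; replace (k + S c - S m)%nat with (k + c - m)%nat by lia.
    replace (S m - 2 * S c)%nat with b by lia; simpl pred; rewrite (Cpow_S U); ring. }
  rewrite !RtoC_mult.
  transitivity (2 * deriv_poly_coef k m c * (Q * mon (pred (k + c - m)) (m - 2 * c) c P Q U * INR (k + c - m))
                - deriv_poly_coef k m c * (U * mon (k + c - m) (pred (m - 2 * c)) c P Q U * INR (m - 2 * c)))%C;
    [ring|rewrite HQ, HU; ring].
Qed.

Lemma mon_RtoC a b c (p q u : R) : mon a b c (RtoC p) (RtoC q) (RtoC u) = RtoC (p ^ a * q ^ b * u ^ c).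
Proof. unfold mon; now rewrite !RtoC_mult, !RtoC_pow. Qed.

Lemma msum_RtoC_real n w a b c (p q u : R) :
  msum n w a b c (RtoC p) (RtoC q) (RtoC u) = RtoC (fst (msum n w a b c (RtoC p) (RtoC q) (RtoC u))).
Proof.
  apply injective_projections; [reflexivity|]; simpl.
  unfold msum; induction n as [|n IH]; simpl sumC; rewrite ?mon_RtoC; simpl; [|rewrite IH]; ring.
Qed.

Lemma Derive_n_pow_sqr_sub1 k m t :
  RtoC (Derive_n (fun u => (u ^ 2 - 1) ^ k) m t)
  = deriv_poly k m (RtoC (t ^ 2 - 1)) (RtoC t) (RtoC (-1)).
Proof.
  revert t; induction m as [|m IH]; intros t.
  - simpl Derive_n; rewrite deriv_poly_0; apply RtoC_pow.
  - set (Pm := fun m t => deriv_poly k m (RtoC (t ^ 2 - 1)) (RtoC t) (RtoC (-1))).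
    assert (HP : is_deriveC (fun u => RtoC (u ^ 2 - 1)) t (2 * t)%R).
    { apply is_deriveC_RtoC; auto_derive; [auto|ring]. }
    assert (HQ : is_deriveC (fun u => RtoC u) t 1).
    { apply is_deriveC_RtoC; auto_derive; auto. }
    assert (Hder : is_deriveC (Pm m) t (Pm (S m) t)).
    { eapply is_deriveC_ext; [reflexivity| |exact (is_deriveC_deriv_poly k m _ _ _ _ _ _ t HP HQ
                                                   (is_deriveC_const (RtoC (-1)) t))].
      unfold Pm; rewrite <- deriv_poly_S, RtoC_mult.
      replace (RtoC (-1)) with (Copp 1) by (apply injective_projections; simpl; ring).
      ring. }
    simpl Derive_n; rewrite (Derive_ext _ (fun u => fst (Pm m u))) by (intros; unfold Pm; now rewrite <- IH).
    replace (Derive _ t) with (fst (Pm (S m) t)) by (symmetry; apply is_derive_unique, Hder).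
    symmetry; apply msum_RtoC_real.
Qed.

Ltac blade_ext := apply functional_extensionality; intros [[[[] []] []] []].
Ltac C_lra := apply injective_projections; simpl; lra.

Lemma e12_blade : e12 = cl_basis (true, true, false, false).
Proof. blade_ext; unfold e12, cl_mul, e1, e2, cl_basis, csum; simpl; C_lra. Qed.

Lemma e34_blade : e34 = cl_basis (false, false, true, true).
Proof. blade_ext; unfold e34, cl_mul, e3, e4, cl_basis, csum; simpl; C_lra. Qed.

Lemma e31_blade : e31 = cl_scal (RtoC (-1)) (cl_basis (true, false, true, false)).
Proof. blade_ext; unfold e31, cl_mul, e3, e1, cl_scal, cl_basis, csum; simpl; C_lra. Qed.

Lemma e23_blade : e23 = cl_basis (false, true, true, false).
Proof. blade_ext; unfold e23, cl_mul, e3, e2, cl_basis, csum; simpl; C_lra. Qed.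

(* Coordinates on the blade basis.  Computing them first keeps each product below a single
   sum over the sixteen blades; unfolding the nested products directly is far too slow. *)
Definition vplus_coords (s : bool) : Cl4 := fun B =>
  match s, B with
  | true, (false, false, false, false) => RtoC (1/4)
  | true, (false, false, true, true) => (0, -1/4)%R
  | true, (true, true, false, false) => (0, -1/4)%R
  | true, (true, true, true, true) => RtoC (-1/4)
  | false, (false, false, false, true) => (0, 1/4)%R
  | false, (false, false, true, false) => RtoC (1/4)
  | false, (true, true, false, true) => RtoC (1/4)
  | false, (true, true, true, false) => (0, -1/4)%R
  | _, _ => RtoC 0
  end.

Definition vminus_coords (s : bool) : Cl4 := fun B =>
  match s, B with
  | true, (false, true, false, true) => RtoC (-1/4)
  | true, (false, true, true, false) => (0, 1/4)%R
  | true, (true, false, false, true) => (0, 1/4)%R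
  | true, (true, false, true, false) => RtoC (1/4)
  | false, (false, true, false, false) => (0, 1/4)%R
  | false, (false, true, true, true) => RtoC (1/4)
  | false, (true, false, false, false) => RtoC (1/4)
  | false, (true, false, true, true) => (0, -1/4)%R
  | _, _ => RtoC 0
  end.

Definition Xcl_coords : Cl4 := fun B =>
  match B with
  | (false, true, true, false) => (0, 1/2)%R
  | (true, false, true, false) => RtoC (1/2)
  | _ => RtoC 0
  end.

Lemma vplus_coords_eq s : vplus s = vplus_coords s.
Proof.
  unfold vplus, f12, f34, g34; rewrite e12_blade, e34_blade.
  destruct s; blade_ext; unfold cl_mul, cl_add, cl_scal, cl_one, e3, e4, cl_basis, csum; simpl; C_lra.
Qed.

Lemma vminus_coords_eq s : vminus s = vminus_coords s.
Proof.
  unfold vminus, f34, g12, g34; rewrite e34_blade.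
  destruct s; blade_ext; unfold cl_mul, cl_add, cl_scal, cl_one, e1, e2, e3, e4, cl_basis, csum;
    simpl; C_lra.
Qed.

Lemma Xcl_coords_eq : Xcl = Xcl_coords.
Proof.
  unfold Xcl, cl_opp; rewrite e31_blade, e23_blade.
  blade_ext; unfold cl_add, cl_scal, cl_basis; simpl; C_lra.
Qed.

Lemma Xcl_vplus s : cl_mul Xcl (vplus s) = cl_scal (RtoC (if s then 1 else -1)) (vminus s).
Proof.
  rewrite Xcl_coords_eq, vplus_coords_eq, vminus_coords_eq.
  destruct s; blade_ext; unfold cl_mul, cl_scal, csum; simpl; C_lra.
Qed.

Lemma Xcl_vminus s : cl_mul Xcl (vminus s) = fun _ => RtoC 0.
Proof.
  rewrite Xcl_coords_eq, vminus_coords_eq.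
  destruct s; blade_ext; unfold cl_mul, csum; simpl; C_lra.
Qed.

Lemma csum_lin l f g a b :
  csum l (fun A => a * f A + b * g A)%C = (a * csum l f + b * csum l g)%C.
Proof. induction l as [|A l IH]; simpl; [|rewrite IH]; ring. Qed.

Lemma Xcl_spinor_pair s a b :
  cl_mul Xcl (spinor_pair s a b) = cl_scal (RtoC (if s then 1 else -1) * a)%C (vminus s).
Proof.
  transitivity (cl_add (cl_scal a (cl_mul Xcl (vplus s))) (cl_scal b (cl_mul Xcl (vminus s)))).
  - apply functional_extensionality; intros D; unfold cl_mul, spinor_pair, cl_add, cl_scal.
    rewrite <- csum_lin; f_equal; apply functional_extensionality; intros A; ring.
  - rewrite Xcl_vplus, Xcl_vminus; apply functional_extensionality; intros D.
    unfold cl_add, cl_scal; ring.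
Qed.

Definition spinor_field (s : bool) (A B : R -> R -> R -> C) : Fn3 :=
  fun x1 x2 x3 => spinor_pair s (A x1 x2 x3) (B x1 x2 x3).

Definition partially_derivable (A : R -> R -> R -> C) : Prop :=
  forall x1 x2 x3,
    (exists l, is_deriveC (fun t => A t x2 x3) x1 l) /\
    (exists l, is_deriveC (fun t => A x1 t x3) x2 l) /\
    (exists l, is_deriveC (fun t => A x1 x2 t) x3 l).

Definition Xminus_diff (A : R -> R -> R -> C) (x1 x2 x3 : R) : C :=
  (RtoC (2 * x3) * (RtoC (1 / 2) * (DeriveC (fun t => A t x2 x3) x1
                                   + Ci * DeriveC (fun t => A x1 t x3) x2))
   + - zc x1 x2 * DeriveC (fun t => A x1 x2 t) x3)%C.

Lemma DeriveC_spinor_pair s fa fb t a b :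
  is_deriveC fa t a -> is_deriveC fb t b ->
  (fun D => DeriveC (fun u => spinor_pair s (fa u) (fb u) D) t) = spinor_pair s a b.
Proof.
  intros Ha Hb; apply functional_extensionality; intros D; apply is_deriveC_unique.
  eapply is_deriveC_ext; [reflexivity| |apply is_deriveC_plus; apply is_deriveC_mult;
    [exact Ha|apply is_deriveC_const|exact Hb|apply is_deriveC_const]].
  unfold spinor_pair, cl_add, cl_scal; ring.
Qed.

Lemma Xminus_spinor_field s A B :
  partially_derivable A -> partially_derivable B ->
  Xminus (spinor_field s A B)
  = spinor_field s (Xminus_diff A)
      (fun x1 x2 x3 => Xminus_diff B x1 x2 x3 + RtoC (if s then 1 else -1) * A x1 x2 x3)%C.
Proof.
  intros HA HB; apply functional_extensionality; intros x1;
    apply functional_extensionality; intros x2; apply functional_extensionality; intros x3.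
  destruct (HA x1 x2 x3) as [[a1 Ha1] [[a2 Ha2] [a3 Ha3]]].
  destruct (HB x1 x2 x3) as [[b1 Hb1] [[b2 Hb2] [b3 Hb3]]].
  unfold Xminus, dzbar, Defs.d1, Defs.d2, Defs.d3, Xminus_diff, spinor_field; cbv beta.
  rewrite (DeriveC_spinor_pair s _ _ _ _ _ Ha1 Hb1), (DeriveC_spinor_pair s _ _ _ _ _ Ha2 Hb2),
    (DeriveC_spinor_pair s _ _ _ _ _ Ha3 Hb3), Xcl_spinor_pair.
  rewrite (is_deriveC_unique _ _ _ Ha1), (is_deriveC_unique _ _ _ Ha2), (is_deriveC_unique _ _ _ Ha3),
    (is_deriveC_unique _ _ _ Hb1), (is_deriveC_unique _ _ _ Hb2), (is_deriveC_unique _ _ _ Hb3).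
  apply functional_extensionality; intros D; unfold spinor_pair, cl_add, cl_scal; ring.
Qed.

Definition deriv_poly_R3 (k m : nat) (x1 x2 x3 : R) : C :=
  deriv_poly k m (zbar x1 x2) (RtoC x3) (zc x1 x2).

Lemma is_deriveC_deriv_poly_R3 k m x1 x2 x3 :
  let dP := deriv_poly_dP k m (zbar x1 x2) (RtoC x3) (zc x1 x2) in
  let dQ := deriv_poly_dQ k m (zbar x1 x2) (RtoC x3) (zc x1 x2) in
  let dU := deriv_poly_dU k m (zbar x1 x2) (RtoC x3) (zc x1 x2) in
  is_deriveC (fun t => deriv_poly_R3 k m t x2 x3) x1 (dP + dU)%C /\
  is_deriveC (fun t => deriv_poly_R3 k m x1 t x3) x2 (Ci * (dU - dP))%C /\
  is_deriveC (fun t => deriv_poly_R3 k m x1 x2 t) x3 dQ.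
Proof.
  assert (Hz1 : is_deriveC (fun t => zbar t x2) x1 1) by (split; simpl; auto_derive; auto).
  assert (Hz2 : is_deriveC (fun t => zbar x1 t) x2 (- Ci)%C) by (split; simpl; auto_derive; auto; ring).
  assert (Hw1 : is_deriveC (fun t => zc t x2) x1 1) by (split; simpl; auto_derive; auto).
  assert (Hw2 : is_deriveC (fun t => zc x1 t) x2 Ci) by (split; simpl; auto_derive; auto).
  assert (Hx3 : is_deriveC (fun t => RtoC t) x3 1) by (apply is_deriveC_RtoC; auto_derive; auto).
  intros dP dQ dU; unfold deriv_poly_R3; split; [|split];
    (eapply is_deriveC_ext; [reflexivity| |apply is_deriveC_deriv_poly; eauto using is_deriveC_const]);
    unfold dP, dQ, dU; ring.
Qed.

Lemma partially_derivable_deriv_poly_R3 K k m :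
  partially_derivable (fun x1 x2 x3 => K * deriv_poly_R3 k m x1 x2 x3)%C.
Proof.
  intros x1 x2 x3; destruct (is_deriveC_deriv_poly_R3 k m x1 x2 x3) as [H1 [H2 H3]].
  repeat split; eexists; apply is_deriveC_scal; eassumption.
Qed.

Lemma Xminus_diff_deriv_poly_R3 K k m :
  Xminus_diff (fun x1 x2 x3 => K * deriv_poly_R3 k m x1 x2 x3)%C
  = (fun x1 x2 x3 => K * deriv_poly_R3 k (S m) x1 x2 x3)%C.
Proof.
  apply functional_extensionality; intros x1;
    apply functional_extensionality; intros x2; apply functional_extensionality; intros x3.
  destruct (is_deriveC_deriv_poly_R3 k m x1 x2 x3) as [H1 [H2 H3]].
  unfold Xminus_diff; rewrite (is_deriveC_unique _ _ _ (is_deriveC_scal K _ _ _ H1)),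
    (is_deriveC_unique _ _ _ (is_deriveC_scal K _ _ _ H2)),
    (is_deriveC_unique _ _ _ (is_deriveC_scal K _ _ _ H3)).
  unfold deriv_poly_R3; rewrite <- deriv_poly_S.
  generalize (deriv_poly_dP k m (zbar x1 x2) (RtoC x3) (zc x1 x2))
    (deriv_poly_dQ k m (zbar x1 x2) (RtoC x3) (zc x1 x2))
    (deriv_poly_dU k m (zbar x1 x2) (RtoC x3) (zc x1 x2)); intros dP dQ dU.
  apply injective_projections; simpl; field.
Qed.

Definition legendre_norm (k : nat) : R := / (INR (fact k) * 2 ^ k).

Lemma F_spinor_field s k j :
  F s k j = spinor_field s
    (fun x1 x2 x3 => legendre_norm k * deriv_poly_R3 k j x1 x2 x3)%C
    (fun x1 x2 x3 => RtoC (if s then 1 else -1) * (INR j * legendre_norm k)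
                     * deriv_poly_R3 k (pred j) x1 x2 x3)%C.
Proof.
  induction j as [|j IH].
  - apply functional_extensionality; intros x1; apply functional_extensionality; intros x2;
      apply functional_extensionality; intros x3; apply functional_extensionality; intros D.
    unfold F, F0, spinor_field, spinor_pair, cl_add, cl_scal, deriv_poly_R3, legendre_norm; simpl.
    rewrite deriv_poly_0; ring.
  - change (F s k (S j)) with (Xminus (F s k j)).
    rewrite IH, Xminus_spinor_field by apply partially_derivable_deriv_poly_R3.
    rewrite !Xminus_diff_deriv_poly_R3; f_equal.
    apply functional_extensionality; intros x1; apply functional_extensionality; intros x2;
      apply functional_extensionality; intros x3.
    destruct j as [|j]; simpl pred; [simpl INR; ring|].
    rewrite (S_INR (S j)), RtoC_plus; ring.
Qed.

Lemma cexpi_plus x y : (cexpi x * cexpi y)%C = cexpi (x + y).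
Proof. unfold cexpi; apply injective_projections; simpl; rewrite ?cos_plus, ?sin_plus; ring. Qed.

Lemma cexpi_pow x n : (cexpi x ^ n)%C = cexpi (INR n * x).
Proof.
  induction n as [|n IH].
  - unfold cexpi; simpl; rewrite Rmult_0_l, cos_0, sin_0; reflexivity.
  - rewrite Cpow_S, IH, cexpi_plus, S_INR; f_equal; ring.
Qed.

Lemma Ci_mul_Ci : (Ci * Ci)%C = Copp 1.
Proof. apply injective_projections; simpl; ring. Qed.

Lemma Ci_zpow_succ n : (Ci_zpow (n - 1) * Ci)%C = Ci_zpow n.
Proof.
  assert (E : (Copp Ci * Ci)%C = 1) by (apply injective_projections; simpl; ring).
  unfold Ci_zpow.
  destruct (Z.leb_spec0 0 (n - 1)) as [H1|H1]; destruct (Z.leb_spec0 0 n) as [H2|H2]; try lia.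
  - replace (Z.to_nat n) with (S (Z.to_nat (n - 1))) by lia; rewrite Cpow_S; ring.
  - replace (Z.to_nat (- (n - 1))) with 1%nat by lia; replace (Z.to_nat n) with 0%nat by lia.
    simpl; rewrite Cmult_1_r, E; reflexivity.
  - replace (Z.to_nat (- (n - 1))) with (S (Z.to_nat (- n))) by lia.
    rewrite Cpow_S, <- Cmult_assoc, (Cmult_comm _ Ci), Cmult_assoc, E; ring.
Qed.

Lemma Ci_pow_mul a c : (Ci ^ a * Ci ^ c)%C = (Copp 1 ^ c * Ci_zpow (Z.of_nat a - Z.of_nat c))%C.
Proof.
  unfold Ci_zpow; destruct (Z.leb_spec0 0 (Z.of_nat a - Z.of_nat c)) as [H|H].
  - replace (Z.to_nat (Z.of_nat a - Z.of_nat c)) with (a - c)%nat by lia.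
    replace a with ((a - c) + c)%nat at 1 by lia.
    rewrite Cpow_add_r, <- Ci_mul_Ci, Cpow_mult_l; ring.
  - replace (Z.to_nat (- (Z.of_nat a - Z.of_nat c))) with (c - a)%nat by lia.
    replace c with (a + (c - a))%nat at 1 2 by lia.
    rewrite !Cpow_add_r, <- Ci_mul_Ci, !Cpow_mult_l.
    replace Ci with (Copp 1 * Copp Ci)%C at 3 by (apply injective_projections; simpl; ring).
    rewrite Cpow_mult_l, <- Ci_mul_Ci, Cpow_mult_l; ring.
Qed.

Lemma mon_spherical a b c k m r th ph :
  (a + b + c = k)%nat -> (a + m = k + c)%nat ->
  mon a b c (zbar (r * sin th * sin ph) (r * sin th * cos ph)) (RtoC (r * cos th))
      (zc (r * sin th * sin ph) (r * sin th * cos ph))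
  = (Ci_zpow (Z.of_nat k - Z.of_nat m) * cexpi ((INR k - INR m) * ph)
     * RtoC (r ^ k * sin th ^ (a + c) * cos th ^ b * (-1) ^ (a + c)))%C.
Proof.
  intros Hk Hm.
  assert (Hzbar : zbar (r * sin th * sin ph) (r * sin th * cos ph)
                  = (RtoC (r * sin th) * (Copp 1 * Ci) * cexpi ph)%C).
  { unfold zbar, cexpi; apply injective_projections; simpl; ring. }
  assert (Hz : zc (r * sin th * sin ph) (r * sin th * cos ph)
               = (RtoC (r * sin th) * Ci * cexpi (- ph))%C).
  { unfold zc, cexpi; rewrite cos_neg, sin_neg; apply injective_projections; simpl; ring. }
  assert (Hphase : (cexpi ph ^ a * cexpi (- ph) ^ c)%C = cexpi ((INR k - INR m) * ph)).
  { rewrite !cexpi_pow, cexpi_plus; f_equal.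
    assert (E : INR a + INR m = INR k + INR c) by (rewrite <- !plus_INR; f_equal; lia).
    nra. }
  assert (Hsign : (Copp 1 ^ a * Ci ^ a * Ci ^ c)%C
                  = (RtoC ((-1) ^ (a + c)) * Ci_zpow (Z.of_nat k - Z.of_nat m))%C).
  { rewrite <- Cmult_assoc, Ci_pow_mul, pow_add, RtoC_mult, !RtoC_pow.
    replace (Z.of_nat a - Z.of_nat c)%Z with (Z.of_nat k - Z.of_nat m)%Z by lia.
    replace (RtoC (-1)) with (Copp 1) by (apply injective_projections; simpl; ring); ring. }
  unfold mon; rewrite Hzbar, Hz, !Cpow_mult_l.
  transitivity (RtoC (r * sin th) ^ a * RtoC (r * cos th) ^ b * RtoC (r * sin th) ^ c
                * (Copp 1 ^ a * Ci ^ a * Ci ^ c) * (cexpi ph ^ a * cexpi (- ph) ^ c))%C; [ring|].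
  rewrite Hsign, Hphase.
  transitivity (Ci_zpow (Z.of_nat k - Z.of_nat m) * cexpi ((INR k - INR m) * ph)
    * (RtoC (r * sin th) ^ a * RtoC (r * cos th) ^ b * RtoC (r * sin th) ^ c
       * RtoC ((-1) ^ (a + c))))%C; [ring|].
  rewrite <- !RtoC_pow, <- !RtoC_mult, <- Hk, !Rpow_mult_distr, !pow_add; do 2 f_equal; ring.
Qed.

Lemma half_pow_sin_sqr k m a c th :
  0 <= th <= PI -> ((k <= m)%nat \/ 0 < sin th) -> (a + m = k + c)%nat ->
  half_pow (1 - cos th ^ 2) (Z.of_nat m - Z.of_nat k) * sin th ^ (2 * a) = sin th ^ (a + c).
Proof.
  intros Hth Hsin Hac.
  replace (1 - cos th ^ 2) with (sin th ^ 2) by (rewrite <- (sin2_cos2 th); unfold Rsqr; ring).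
  unfold half_pow; rewrite sqrt_pow2 by (apply sin_ge_0; lra).
  destruct (Z.leb_spec0 0 (Z.of_nat m - Z.of_nat k)) as [H|H].
  - rewrite <- pow_add; f_equal; lia.
  - destruct Hsin as [Hsin|Hsin]; [lia|].
    replace (Z.to_nat (- (Z.of_nat m - Z.of_nat k))) with (k - m)%nat by lia.
    replace (2 * a)%nat with ((a + c) + (k - m))%nat by lia; rewrite pow_add.
    field; apply pow_nonzero; lra.
Qed.

Lemma deriv_poly_R3_spherical k m r th ph :
  0 <= th <= PI -> ((k <= m)%nat \/ 0 < sin th) ->
  deriv_poly_R3 k m (r * sin th * sin ph) (r * sin th * cos ph) (r * cos th)
  = (Ci_zpow (Z.of_nat k - Z.of_nat m) * cexpi ((INR k - INR m) * ph)
     * RtoC (r ^ k * half_pow (1 - cos th ^ 2) (Z.of_nat m - Z.of_nat k))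
     * deriv_poly k m (RtoC (cos th ^ 2 - 1)) (RtoC (cos th)) (RtoC (-1)))%C.
Proof.
  intros Hth Hsin; unfold deriv_poly_R3, deriv_poly, msum; rewrite <- sumC_mult_l.
  apply sumC_ext; intros c _.
  destruct (Req_dec (deriv_poly_coef k m c) 0) as [H0|Hsupp]; [rewrite H0; ring|].
  apply deriv_poly_coef_support in Hsupp.
  rewrite (mon_spherical _ _ _ k m) by lia; rewrite mon_RtoC.
  set (a := (k + c - m)%nat); set (b := (m - 2 * c)%nat).
  assert (Hreal : r ^ k * sin th ^ (a + c) * cos th ^ b * (-1) ^ (a + c)
                  = r ^ k * half_pow (1 - cos th ^ 2) (Z.of_nat m - Z.of_nat k)
                    * ((cos th ^ 2 - 1) ^ a * cos th ^ b * (-1) ^ c)).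
  { replace (cos th ^ 2 - 1) with (-1 * sin th ^ 2)
      by (rewrite <- (sin2_cos2 th); unfold Rsqr; ring).
    rewrite <- (half_pow_sin_sqr k m a c th Hth Hsin) by (unfold a; lia).
    rewrite Rpow_mult_distr, <- pow_mult, pow_add; ring. }
  rewrite Hreal, !RtoC_mult; ring.
Qed.

Lemma assocLegendre_deriv_poly k m s :
  RtoC (assocLegendre (Z.of_nat m - Z.of_nat k) k s)
  = (RtoC (legendre_norm k * half_pow (1 - s ^ 2) (Z.of_nat m - Z.of_nat k))
     * deriv_poly k m (RtoC (s ^ 2 - 1)) (RtoC s) (RtoC (-1)))%C.
Proof.
  unfold assocLegendre; replace (Z.of_nat m - Z.of_nat k + Z.of_nat k)%Z with (Z.of_nat m) by lia.
  destruct (Z.ltb_spec0 (Z.of_nat m) 0) as [H|_]; [lia|].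
  rewrite Nat2Z.id, RtoC_mult, Derive_n_pow_sqr_sub1; reflexivity.
Qed.

Lemma deriv_poly_R3_assocLegendre k m r th ph :
  0 <= th <= PI -> ((k <= m)%nat \/ 0 < sin th) ->
  (legendre_norm k * deriv_poly_R3 k m (r * sin th * sin ph) (r * sin th * cos ph) (r * cos th))%C
  = (Ci_zpow (Z.of_nat k - Z.of_nat m) * (RtoC (r ^ k) * cexpi ((INR k - INR m) * ph))
     * RtoC (assocLegendre (Z.of_nat m - Z.of_nat k) k (cos th)))%C.
Proof.
  intros Hth Hsin.
  rewrite deriv_poly_R3_spherical, assocLegendre_deriv_poly by assumption.
  rewrite !RtoC_mult; ring.
Qed.

Lemma cl_scal_spinor_pair K s a b :
  cl_scal K (spinor_pair s a b) = spinor_pair s (K * a)%C (K * b)%C.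
Proof.
  apply functional_extensionality; intros D; unfold cl_scal, spinor_pair, cl_add, cl_scal; ring.
Qed.

Theorem theorem3p4 :
  forall (s : bool) (k j : nat) (r theta phi : R),
    (j <= 2 * k + 1)%nat ->
    0 <= r ->
    - PI <= phi <= PI ->
    0 <= theta <= PI ->
    ((0 < theta < PI) \/ (k < j)%nat \/ k = 0%nat) ->
    F s k j (r * sin theta * sin phi) (r * sin theta * cos phi) (r * cos theta)
    = cl_scal
        (Cmult (Ci_zpow (Z.of_nat k - Z.of_nat j))
               (Cmult (RtoC (r ^ k))
                      (cexpi ((INR k - INR j) * phi))))
        (spinor_pair s
           (RtoC (assocLegendre (Z.of_nat j - Z.of_nat k) k (cos theta)))
           (Cmult (Cmult (RtoC (if s then 1 else -1)) (Cmult Ci (RtoC (INR j))))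
                  (Cmult (cexpi phi)
                         (RtoC (assocLegendre (Z.of_nat j - Z.of_nat k - 1) k (cos theta)))))).
Proof.
  intros s k j r theta phi _ _ _ Hth Hdef.
  rewrite F_spinor_field; unfold spinor_field; rewrite cl_scal_spinor_pair; f_equal.
  - rewrite deriv_poly_R3_assocLegendre; [ring|exact Hth|].
    destruct Hdef as [H|[H|H]]; [right; apply sin_gt_0; lra|left; lia|left; lia].
  - destruct j as [|j]; simpl pred; [simpl INR; ring|].
    assert (Hcond : (k <= j)%nat \/ 0 < sin theta).
    { destruct Hdef as [H|[H|H]]; [right; apply sin_gt_0; lra|left; lia|left; lia]. }
    transitivity (RtoC (if s then 1 else -1) * INR (S j)
                  * (legendre_norm k * deriv_poly_R3 k j (r * sin theta * sin phi)
                                        (r * sin theta * cos phi) (r * cos theta)))%C; [ring|].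
    rewrite deriv_poly_R3_assocLegendre by assumption.
    replace (Z.of_nat (S j) - Z.of_nat k - 1)%Z with (Z.of_nat j - Z.of_nat k)%Z by lia.
    rewrite <- (Ci_zpow_succ (Z.of_nat k - Z.of_nat j)).
    replace (Z.of_nat k - Z.of_nat j - 1)%Z with (Z.of_nat k - Z.of_nat (S j))%Z by lia.
    replace ((INR k - INR j) * phi) with ((INR k - INR (S j)) * phi + phi) by (rewrite S_INR; ring).
    rewrite <- cexpi_plus; ring.
Qed.
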